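(* Let $d,N\in\mathbb{N}$ and, for each $k=0,\dots,N-1$, let $\mathcal{L}^k_d:(\mathbb{R}^d)^{k+2}\times(\mathbb{R}^d)^{N+1-k}\to\mathbb{R}$, $(x_0,\dots,x_{k+1};y_k,\dots,y_N)\mapsto\mathcal{L}^k_d(x_{(0,k+1)},y_{(k,N)})$, be differentiable. Fix $x_a,x_b,y_a,y_b\in\mathbb{R}^d$ and consider discrete curves $\{x_k\}_{k=0}^N,\{y_k\}_{k=0}^N\subset\mathbb{R}^d$ with $x_0=x_a$, $x_N=x_b$, $y_0=y_a$, $y_N=y_b$, and the discrete action $$S_d=\sum_{k=0}^{N-1}\mathcal{L}^k_d(x_{(0,k+1)},y_{(k,N)}).$$ Consider restricted variations: for $\{\eta_k\}_{k=0}^N\subset\mathbb{R}^d$ with $\eta_0=\eta_N=0$ and $\epsilon\in\mathbb{R}$, the varied curves are $x_k+\epsilon\eta_k$, $y_k+\epsilon\eta_k$ (the same variation for both). Then a pair of discrete curves satisfies $\frac{d}{d\epsilon}S_d\big|_{\epsilon=0}=0$ for all such $\{\eta_k\}$ if and only if $$\sum_{i=k-1}^{N-1}D_{x_k}\mathcal{L}^i_d(x_{(0,i+1)},y_{(i,N)})+\sum_{i=0}^{k}D_{y_k}\mathcal{L}^i_d(x_{(0,i+1)},y_{(i,N)})=0\qquad\text{for }k=1,\dots,N-1,$$ where $D_{x_k}=\partial/\partial x_k$ and $D_{y_k}=\partial/\partial y_k$.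
   Context: Notation: $x_{(0,k+1)}:=(x_0,\dots,x_{k+1})\in(\mathbb{R}^d)^{k+2}$ and $y_{(k,N)}:=(y_k,\dots,y_N)\in(\mathbb{R}^d)^{N+1-k}$. *)

(* R : realType, R^d rendered as row vectors 'rV[R]_d,
   a discrete curve {x_k}_{k=0}^N as a matrix 'M[R]_(N.+1, d) whose row k is x_k. *)
From HB Require Import structures.
From mathcomp Require Import all_boot all_order all_algebra.
From mathcomp Require Import all_classical all_reals all_analysis.
Set Implicit Arguments. Unset Strict Implicit. Unset Printing Implicit Defensive.
Import Order.TTheory GRing.Theory Num.Theory.
Import numFieldNormedType.Exports.
Local Open Scope ring_scope.

Definition xseg (R : realType) (d N : nat) (i : 'I_N) (x : 'M[R]_(N.+1, d))
  : 'M[R]_(i.+2, d) := \matrix_(r < i.+2, c < d) x (inord r) c.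

(* y_{(i,N)} = (y_i, ..., y_N) for i < N  (N + 1 - i = (N - i).+1 entries) *)
Definition yseg (R : realType) (d N : nat) (i : 'I_N) (y : 'M[R]_(N.+1, d))
  : 'M[R]_((N - i).+1, d) := \matrix_(r < (N - i).+1, c < d) y (inord (i + r)) c.

Definition lagrangians (R : realType) (d N : nat) :=
  forall i : 'I_N, 'M[R]_(i.+2, d) * 'M[R]_((N - i).+1, d) -> R.

Definition action (R : realType) (d N : nat) (L : lagrangians R d N)
  (x y : 'M[R]_(N.+1, d)) : R :=
  \sum_(i < N) L i (xseg i x, yseg i y).

(* partial derivative (gradient, as a row vector in R^d) of
   f : (R^d)^m x (R^d)^n -> R w.r.t. the r-th vector of the first block *)
Definition pdx (R : realType) (d m n : nat) (f : 'M[R]_(m, d) * 'M[R]_(n, d) -> R)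
  (p : 'M[R]_(m, d) * 'M[R]_(n, d)) (r : 'I_m) : 'rV[R]_d :=
  \row_(j < d) ('D_((delta_mx r j, 0) : 'M[R]_(m, d) * 'M[R]_(n, d)) f p).

Definition pdy (R : realType) (d m n : nat) (f : 'M[R]_(m, d) * 'M[R]_(n, d) -> R)
  (p : 'M[R]_(m, d) * 'M[R]_(n, d)) (r : 'I_n) : 'rV[R]_d :=
  \row_(j < d) ('D_((0, delta_mx r j) : 'M[R]_(m, d) * 'M[R]_(n, d)) f p).

Set Warnings "-notation-overridden,-ambiguous-paths,-notation-incompatible-prefix".
From HB Require Import structures.
From mathcomp Require Import all_boot all_order all_algebra.
From mathcomp Require Import all_classical all_reals all_analysis.
Import Order.TTheory GRing.Theory Num.Theory.
Import numFieldNormedType.Exports.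
Local Open Scope ring_scope.

(* The same variation eta moves both curves, so by the chain rule the first variation of S_d
   is sum_k <eta_k, E_k>, where E_k collects the partial derivatives of every L^i with respect
   to x_k and to y_k: x_k is entry k of x_(0,i+1) exactly when k <= i+1, and y_k is entry k - i
   of y_(i,N) exactly when i <= k.  These E_k are the left-hand sides of the discrete
   Euler-Lagrange equations, and a linear form in eta vanishes on every eta with
   eta_0 = eta_N = 0 iff its interior coefficients vanish (test it on the unit variations).
   The endpoint values x_a, x_b, y_a, y_b play no role. *)


Section DirectionalDerivative.
Context {R : numFieldType} {V W : normedModType R}.

Lemma derive_line (f : V -> W) (p v : V) :
  'D_1 (fun h : R => f (p + h *: v)) 0 = 'D_v f p.
Proof.
suff E : (fun h : R => h^-1 *: (((fun e => f (p + e *: v)) \o shift 0) h%:A - f (p + 0 *: v)))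
    = (fun h => h^-1 *: ((f \o shift p) (h *: v) - f p)) by rewrite /derive E.
by apply: funext => h /=; rewrite scale0r !addr0 [p + _]addrC [h%:A]mulr1.
Qed.

Lemma derivable_line (f : V -> W) (p v : V) :
  derivable (fun h : R => f (p + h *: v)) 0 1 <-> derivable f p v.
Proof.
rewrite (derivable1P f).
suff -> : (fun h : R => f (p + h *: v)) = (fun h => f (h *: v + p)) by [].
by apply: funext => h; rewrite addrC.
Qed.

End DirectionalDerivative.

Lemma pair_suml (U V : nmodType) I (r : seq I) (P : pred I) (F : I -> U) :
  ((\sum_(i <- r | P i) F i, 0) : U * V) = \sum_(i <- r | P i) (F i, 0).
Proof. by elim/big_rec2: _ => // i a b _ <-; congr pair; rewrite addr0. Qed.

Lemma pair_sumr (U V : nmodType) I (r : seq I) (P : pred I) (F : I -> V) :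
  ((0, \sum_(i <- r | P i) F i) : U * V) = \sum_(i <- r | P i) (0, F i).
Proof. by elim/big_rec2: _ => // i a b _ <-; congr pair; rewrite addr0. Qed.

Lemma pair_scalel (R : pzSemiRingType) (U V : lSemiModType R) (a : R) (u : U) :
  ((a *: u, 0) : U * V) = a *: (u, 0).
Proof. by congr pair; rewrite scaler0. Qed.

Lemma pair_scaler (R : pzSemiRingType) (U V : lSemiModType R) (a : R) (v : V) :
  ((0, a *: v) : U * V) = a *: (0, v).
Proof. by congr pair; rewrite scaler0. Qed.

Lemma derive_pdxy {R : realType} {d m n : nat} {f : 'M[R]_(m, d) * 'M[R]_(n, d) -> R}
    {p : 'M[R]_(m, d) * 'M[R]_(n, d)} (A : 'M[R]_(m, d)) (B : 'M[R]_(n, d)) :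
  differentiable f p ->
  'D_((A, B) : 'M[R]_(m, d) * 'M[R]_(n, d)) f p =
  \sum_(r < m) \sum_(j < d) A r j * pdx f p r 0 j
  + \sum_(r < n) \sum_(j < d) B r j * pdy f p r 0 j.
Proof.
move=> df; rewrite deriveE //.
have -> : ((A, B) : 'M[R]_(m, d) * 'M[R]_(n, d)) = (A, 0) + (0, B).
  by congr pair; rewrite (addr0, add0r).
rewrite [A in (A, 0)]matrix_sum_delta [B in (0, B)]matrix_sum_delta.
rewrite pair_suml pair_sumr linearD !linear_sum.
congr (_ + _); apply: eq_bigr => r _.
- rewrite pair_suml linear_sum; apply: eq_bigr => j _.
  by rewrite pair_scalel linearZ /= mxE deriveE.
- rewrite pair_sumr linear_sum; apply: eq_bigr => j _.
  by rewrite pair_scaler linearZ /= mxE deriveE.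
Qed.

Lemma exchange_big_prefix (V : nmodType) (N : nat) (G : forall i : 'I_N, 'I_i.+2 -> V) :
  \sum_(i < N) \sum_(r < i.+2) G i r =
  \sum_(k < N.+1) \sum_(i < N | (k <= i.+1)%N) G i (inord k).
Proof.
have widen (i : 'I_N) : \sum_(r < i.+2) G i r = \sum_(k < N.+1 | (k <= i.+1)%N) G i (inord k).
  transitivity (\sum_(r < i.+2) G i (inord r)).
    by apply: eq_bigr => r _; rewrite inord_val.
  by rewrite (big_ord_widen N.+1 (fun r : nat => G i (inord r))) ?ltnS.
by rewrite (eq_bigr _ (fun i _ => widen i)) (exchange_big_dep xpredT).
Qed.

Lemma exchange_big_suffix (V : nmodType) (N : nat)
    (G : forall i : 'I_N, 'I_(N - i).+1 -> V) :
  \sum_(i < N) \sum_(r < (N - i).+1) G i r =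
  \sum_(k < N.+1) \sum_(i < N | (i <= k)%N) G i (inord (k - i)).
Proof.
have shift (i : 'I_N) : \sum_(r < (N - i).+1) G i r =
    \sum_(k < N.+1 | (i <= k)%N) G i (inord (k - i)).
  pose F k := G i (inord (k - i)).
  rewrite -(big_geq_mkord i N.+1 xpredT F) -[in RHS](add0n i) big_addn.
  rewrite subSn ?(ltnW (ltn_ord i)) // big_mkord.
  by apply: eq_bigr => r _; rewrite /F addnK inord_val.
by rewrite (eq_bigr _ (fun i _ => shift i)) (exchange_big_dep xpredT).
Qed.

Section FundamentalLemma.
Context {R : pzSemiRingType} {d N : nat}.

Lemma sum_delta_mul (E : 'I_N.+1 -> 'rV[R]_d) (k0 : 'I_N.+1) (j0 : 'I_d) :
  \sum_(k < N.+1) \sum_(j < d) delta_mx k0 j0 k j * E k 0 j = E k0 0 j0.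
Proof.
rewrite (bigD1 k0) //= (bigD1 j0) //= mxE !eqxx mul1r.
rewrite big1 ?addr0 => [|j /negbTE nj]; last by rewrite mxE nj andbF mul0r.
rewrite big1 ?addr0 // => k /negbTE nk; apply: big1 => j _.
by rewrite mxE nk mul0r.
Qed.

Lemma discrete_fundamental_lemma (E : 'I_N.+1 -> 'rV[R]_d) :
  (forall eta : 'M[R]_(N.+1, d), row ord0 eta = 0 -> row ord_max eta = 0 ->
     \sum_(k < N.+1) \sum_(j < d) eta k j * E k 0 j = 0)
  <-> (forall k : 'I_N.+1, (0 < k)%N -> (k < N)%N -> E k = 0).
Proof.
split=> [vanish k k_gt0 k_ltN | E0 eta eta0 etaN].
  have row_delta (b : 'I_N.+1) j : b != k -> row b (delta_mx k j : 'M[R]_(N.+1, d)) = 0.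
    by move=> /negbTE bk; apply/rowP => c; rewrite !mxE bk.
  apply/rowP => j; rewrite mxE -(sum_delta_mul E k j) vanish // row_delta //.
  - by rewrite -val_eqE /= eq_sym -lt0n.
  - by rewrite -val_eqE /= neq_ltn k_ltN orbT.
apply: big1 => k _; apply: big1 => j _.
have [k_gt0|] := ltnP 0 k; last first.
  rewrite leqn0 => /eqP k0; have -> : k = ord0 by apply: val_inj.
  by move/rowP/(_ j): eta0; rewrite !mxE => ->; rewrite mul0r.
have [k_ltN|] := ltnP k N; first by rewrite E0 // mxE mulr0.
rewrite -ltnS => k_leN; have -> : k = ord_max.
  by apply: val_inj => /=; apply/eqP; rewrite eqn_leq -ltnS ltn_ord.
by move/rowP/(_ j): etaN; rewrite !mxE => ->; rewrite mul0r.
Qed.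

End FundamentalLemma.

Section Segments.
Context {R : realType} {d N : nat} (i : 'I_N).

Lemma xsegDZ (x eta : 'M[R]_(N.+1, d)) (e : R) :
  xseg i (x + e *: eta) = xseg i x + e *: xseg i eta.
Proof. by apply/matrixP => r c; rewrite !mxE. Qed.

Lemma ysegDZ (y eta : 'M[R]_(N.+1, d)) (e : R) :
  yseg i (y + e *: eta) = yseg i y + e *: yseg i eta.
Proof. by apply/matrixP => r c; rewrite !mxE. Qed.

Lemma xseg_inord (x : 'M[R]_(N.+1, d)) (k : 'I_N.+1) (j : 'I_d) :
  (k <= i.+1)%N -> xseg i x (inord k) j = x k j.
Proof. by move=> k_le; rewrite mxE inordK ?ltnS // inord_val. Qed.

Lemma yseg_inord (y : 'M[R]_(N.+1, d)) (k : 'I_N.+1) (j : 'I_d) :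
  (i <= k)%N -> yseg i y (inord (k - i)) j = y k j.
Proof.
move=> i_le; rewrite mxE inordK ?subnKC ?inord_val //.
by rewrite ltnS leq_sub2r // -ltnS.
Qed.

End Segments.

Section FirstVariation.
Context {R : realType} {d N : nat} (L : lagrangians R d N).
Hypothesis L_diff : forall (i : 'I_N) (p : 'M[R]_(i.+2, d) * 'M[R]_((N - i).+1, d)),
  differentiable (L i) p.
Variables x y : 'M[R]_(N.+1, d).

Definition euler_lagrange (k : 'I_N.+1) : 'rV[R]_d :=
  \sum_(i < N | (k <= i.+1)%N) pdx (L i) (xseg i x, yseg i y) (inord k)
  + \sum_(i < N | (i <= k)%N) pdy (L i) (xseg i x, yseg i y) (inord (k - i)).

Lemma derive1_action (eta : 'M[R]_(N.+1, d)) :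
  derive1 (fun e : R => action L (x + e *: eta) (y + e *: eta)) 0 =
  \sum_(i < N) 'D_((xseg i eta, yseg i eta) : 'M[R]_(i.+2, d) * 'M[R]_((N - i).+1, d))
     (L i) (xseg i x, yseg i y).
Proof.
have -> : (fun e : R => action L (x + e *: eta) (y + e *: eta)) =
    \sum_(i < N) (fun e : R => L i ((xseg i x, yseg i y) + e *: (xseg i eta, yseg i eta))).
  by apply: funext => e; rewrite fct_sumE; apply: eq_bigr => i _; rewrite xsegDZ ysegDZ.
rewrite derive1E derive_sum => [|i]; last by apply/derivable_line/diff_derivable.
by apply: eq_bigr => i _; rewrite derive_line.
Qed.

Lemma first_variation (eta : 'M[R]_(N.+1, d)) :
  derive1 (fun e : R => action L (x + e *: eta) (y + e *: eta)) 0 =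
  \sum_(k < N.+1) \sum_(j < d) eta k j * euler_lagrange k 0 j.
Proof.
rewrite derive1_action (eq_bigr _ (fun i _ => derive_pdxy _ _ (L_diff i _))).
rewrite big_split /= exchange_big_prefix exchange_big_suffix -big_split /=.
apply: eq_bigr => k _.
under [RHS]eq_bigr => j _ do rewrite mxE mulrDr.
rewrite big_split /=; congr (_ + _);
  under [RHS]eq_bigr => j _ do rewrite summxE mulr_sumr;
  rewrite [RHS]exchange_big; apply: eq_bigr => i ik; apply: eq_bigr => j _.
- by rewrite xseg_inord.
- by rewrite yseg_inord.
Qed.

End FirstVariation.

Theorem proposition4p5 (R : realType) (d N : nat) (L : lagrangians R d N)
  (hL : forall (i : 'I_N) (p : 'M[R]_(i.+2, d) * 'M[R]_((N - i).+1, d)),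
          differentiable (L i) p)
  (xa xb ya yb : 'rV[R]_d) (x y : 'M[R]_(N.+1, d))
  (hx0 : row ord0 x = xa) (hxN : row ord_max x = xb)
  (hy0 : row ord0 y = ya) (hyN : row ord_max y = yb) :
  (forall eta : 'M[R]_(N.+1, d), row ord0 eta = 0 -> row ord_max eta = 0 ->
     derive1 (fun e : R => action L (x + e *: eta) (y + e *: eta)) 0 = 0)
  <->
  (forall k : 'I_N.+1, (0 < k)%N -> (k < N)%N ->
     \sum_(i < N | (k <= i.+1)%N) pdx (L i) (xseg i x, yseg i y) (inord k)
     + \sum_(i < N | (i <= k)%N) pdy (L i) (xseg i x, yseg i y) (inord (k - i))
     = 0).
Proof.
apply: iff_trans (discrete_fundamental_lemma (euler_lagrange L x y)).
by split=> vanish eta eta0 etaN; move: (vanish eta eta0 etaN); rewrite (first_variation _ hL).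
Qed.
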